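(* Let $\eta,\sigma>0$, $\kappa>0$, $\rho\in(-1,1)$, $b<1$ with $b\ne0$, and $K=[\alpha,\beta]$ with $-\infty\le\alpha<\beta\le\infty$. Set $B_-=\frac{(1-b)\alpha-\eta}\sigma$ and $B_+=\frac{(1-b)\beta-\eta}\sigma$. Then for every $B\in\mathbb R$ a minimiser of $\lambda\mapsto2(1-b)\delta_K(\lambda)+(\eta+\lambda+\sigma\rho B)^2$ over $\lambda\in\mathbb R$ is $$\lambda^\ast(B)=[(1-b)\alpha-(\eta+\sigma\rho B)]\mathbf 1_{\{\rho B<B_-\}}+[(1-b)\beta-(\eta+\sigma\rho B)]\mathbf 1_{\{\rho B>B_+\}}.$$ Moreover, a function $B$ solves $$B'(\tau)=-\kappa B(\tau)+\tfrac12\sigma^2B(\tau)^2+\tfrac12\tfrac b{1-b}\inf_{\lambda\in\mathbb R}\Big(2(1-b)\delta_K(\lambda)+(\eta+\lambda+\sigma\rho B(\tau))^2\Big),\quad B(0)=0,$$ if and only if $B(0)=0$ and $$B'(\tau)=\big(-r_0^-+r_1^-B+\tfrac12r_2^-B^2\big)\mathbf 1_{\{\rho B<B_-\}}+\big(-r_0+r_1B+\tfrac12r_2B^2\big)\mathbf 1_{\{B_-\le\rho B\le B_+\}}+\big(-r_0^++r_1^+B+\tfrac12r_2^+B^2\big)\mathbf 1_{\{B_+<\rho B\}},$$ where $B=B(\tau)$ on the right-hand side.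
   Context: $\delta_K(x)=-\inf_{y\in K}xy=-\alpha x\mathbf 1_{\{x>0\}}-\beta x\mathbf 1_{\{x<0\}}$ is the support function of $K$. Coefficients: $r_0^-=\tfrac12 b\alpha((1-b)\alpha-2\eta)$, $r_1^-=b\sigma\rho\alpha-\kappa$, $r_2^-=\sigma^2$; $r_0=-\frac b{2(1-b)}\eta^2$, $r_1=\frac b{1-b}\eta\sigma\rho-\kappa$, $r_2=\sigma^2(1+\frac b{1-b}\rho^2)$; $r_0^+=\tfrac12 b\beta((1-b)\beta-2\eta)$, $r_1^+=b\sigma\rho\beta-\kappa$, $r_2^+=\sigma^2$. (These arise from a constrained CRRA portfolio problem in Heston's model, with $\eta$ the market-price-of-risk coefficient, $\kappa$ the mean-reversion speed, $\sigma$ the vol-of-vol and $\rho$ the correlation.) *)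

From mathcomp Require Import all_boot all_order all_algebra.
From mathcomp Require Import all_classical all_reals all_analysis.
Import Order.TTheory GRing.Theory Num.Theory.
Set Implicit Arguments.
Unset Strict Implicit.
Local Open Scope ring_scope.

Section Defs.
Variable R : realType.
Implicit Types (eta sigma kappa rho b x l : R) (a c : \bar R).

(* support function of K = [a, c]:
   delta_K(x) = - a x 1_{x>0} - c x 1_{x<0}  (with 0 * (+-oo) = 0) *)
Definition deltaK a c (x : R) : \bar R :=
  (- (a * x%:E * (0 < x)%R%:R%:E) - c * x%:E * (x < 0)%R%:R%:E)%E.

Definition objK b eta sigma rho a c (B l : R) : \bar R :=
  ((2 * (1 - b))%:E * deltaK a c l + ((eta + l + sigma * rho * B) ^+ 2)%:E)%E.

Definition Bminus b eta sigma a : \bar R :=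
  (((1 - b)%:E * a - eta%:E) * (sigma^-1)%:E)%E.
Definition Bplus b eta sigma c : \bar R :=
  (((1 - b)%:E * c - eta%:E) * (sigma^-1)%:E)%E.

(* the candidate minimiser lambda^*(B) (fine a / fine c only used when the
   corresponding indicator is 1, in which case the endpoint is finite) *)
Definition lamstar b eta sigma rho a c (B : R) : R :=
  ((1 - b) * fine a - (eta + sigma * rho * B))
      * ((rho * B)%:E < Bminus b eta sigma a)%E%:R
  + ((1 - b) * fine c - (eta + sigma * rho * B))
      * (Bplus b eta sigma c < (rho * B)%:E)%E%:R.

Definition hjb_rhs kappa b eta sigma rho a c (B : R) : \bar R :=
  ((- kappa * B + 2^-1 * sigma ^+ 2 * B ^+ 2)%:E
   + (2^-1 * (b / (1 - b)))%:E
     * ereal_inf (range (objK b eta sigma rho a c B)))%E.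

Definition r0m b eta a : R := 2^-1 * b * fine a * ((1 - b) * fine a - 2 * eta).
Definition r1m kappa b sigma rho a : R := b * sigma * rho * fine a - kappa.
Definition r2m sigma : R := sigma ^+ 2.
Definition r0 b eta : R := - (b / (2 * (1 - b))) * eta ^+ 2.
Definition r1 kappa b eta sigma rho : R := b / (1 - b) * eta * sigma * rho - kappa.
Definition r2 b sigma rho : R := sigma ^+ 2 * (1 + b / (1 - b) * rho ^+ 2).
Definition r0p b eta c : R := 2^-1 * b * fine c * ((1 - b) * fine c - 2 * eta).
Definition r1p kappa b sigma rho c : R := b * sigma * rho * fine c - kappa.
Definition r2p sigma : R := sigma ^+ 2.

Definition pw_rhs kappa b eta sigma rho a c (B : R) : R :=
  (- r0m b eta a + r1m kappa b sigma rho a * B + 2^-1 * r2m sigma * B ^+ 2)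
    * ((rho * B)%:E < Bminus b eta sigma a)%E%:R
  + (- r0 b eta + r1 kappa b eta sigma rho * B + 2^-1 * r2 b sigma rho * B ^+ 2)
    * ((Bminus b eta sigma a <= (rho * B)%:E)
       && ((rho * B)%:E <= Bplus b eta sigma c))%E%:R
  + (- r0p b eta c + r1p kappa b sigma rho c * B + 2^-1 * r2p sigma * B ^+ 2)
    * (Bplus b eta sigma c < (rho * B)%:E)%E%:R.

End Defs.

From mathcomp Require Import all_boot all_order all_algebra.
From mathcomp Require Import all_classical all_reals all_analysis.
From mathcomp Require Import ring lra.
Import Order.TTheory GRing.Theory Num.Theory.
Local Open Scope ring_scope.

(** For every y in K the support function dominates l |-> -y l, so the
  objective is bounded below by 2(1-b)(-y l) + (m + l)^2, m = eta + sigma rho B;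
  completing the square, this is at least (1-b) y (2m - (1-b) y).  Taking for y
  the projection of m/(1-b) onto K, the point lambda^* = (1-b) y - m attains the
  bound: it is positive only when y = alpha and negative only when y = beta,
  where delta_K is linear with slope -y.  The three positions of m/(1-b)
  relative to K are exactly the three indicator sets of the statement, so
  plugging the minimum into the HJB equation yields the piecewise Riccati
  right-hand side. *)

Section SupportFunction.
Variable R : realType.
Implicit Types (a c : \bar R) (y l : R).

Lemma deltaK_gt0 a c l : 0 < l -> deltaK a c l = (- (a * l%:E))%E.
Proof.
by move=> l0; rewrite /deltaK l0 ltNge (ltW l0) /= mule1 mule0 sube0.
Qed.

Lemma deltaK_lt0 a c l : l < 0 -> deltaK a c l = (- (c * l%:E))%E.
Proof.
by move=> l0; rewrite /deltaK l0 ltNge (ltW l0) /= mule1 mule0 oppe0 add0e.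
Qed.

Lemma deltaK0 a c : deltaK a c 0 = 0%E.
Proof. by rewrite /deltaK ltxx /= !mule0 oppe0 adde0. Qed.

Lemma deltaK_ge_linear a c y l : (a <= y%:E)%E -> (y%:E <= c)%E ->
  ((- (y * l))%:E <= deltaK a c l)%E.
Proof.
move=> ay yc; case: (ltgtP l 0) => [l0|l0|->].
- rewrite deltaK_lt0 // -mulrN -muleN -EFinN EFinM.
  by apply: lee_wpmul2r => //; rewrite lee_fin oppr_ge0 ltW.
- rewrite deltaK_gt0 // EFinN leeN2 EFinM.
  by apply: lee_wpmul2r => //; rewrite lee_fin ltW.
- by rewrite deltaK0 mulr0 oppr0.
Qed.

End SupportFunction.

Section Minimiser.
Variables (R : realType) (kappa b eta sigma rho : R) (a c : \bar R).
Hypotheses (sigma_gt0 : 0 < sigma) (b_lt1 : b < 1) (ac : (a < c)%E).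

Let b1_gt0 : 0 < 1 - b. Proof. by rewrite subr_gt0. Qed.

Definition projK x : R :=
  if (x%:E < a)%E then fine a else if (c < x%:E)%E then fine c else x.

Lemma lt_Bminus B : ((rho * B)%:E < Bminus b eta sigma a)%E =
  (((eta + sigma * rho * B) / (1 - b))%:E < a)%E.
Proof.
case: a => [a'| |] /=.
- rewrite /Bminus -EFinM !lte_fin ltr_pdivlMr // ltr_pdivrMr //.
  by apply/idP/idP; lra.
- rewrite /Bminus gt0_muley // addye // gt0_mulye ?lte_fin ?invr_gt0 //.
  by rewrite !ltry.
- by rewrite /Bminus gt0_muleNy // addNye gt0_mulNye ?lte_fin ?invr_gt0 //.
Qed.

Lemma lt_Bplus B : (Bplus b eta sigma c < (rho * B)%:E)%E =
  (c < ((eta + sigma * rho * B) / (1 - b))%:E)%E.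
Proof.
case: c => [c'| |] /=.
- rewrite /Bplus -EFinM !lte_fin ltr_pdivrMr // ltr_pdivlMr //.
  by apply/idP/idP; lra.
- by rewrite /Bplus gt0_muley // addye // gt0_mulye ?lte_fin ?invr_gt0 //.
- rewrite /Bplus gt0_muleNy // addNye gt0_mulNye ?lte_fin ?invr_gt0 //.
  by rewrite !ltNyr.
Qed.

Variant projK_spec x : R -> bool -> bool -> Type :=
  | ProjK_below a' of a = a'%:E & x < a' : projK_spec x a' true false
  | ProjK_above c' of c = c'%:E & c' < x : projK_spec x c' false true
  | ProjK_inside of (a <= x%:E)%E & (x%:E <= c)%E : projK_spec x x false false.

Lemma projKP x : projK_spec x (projK x) (x%:E < a)%E (c < x%:E)%E.
Proof.
rewrite /projK; case: ifPn => [xa | ]; last rewrite -leNgt => ax.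
  have aF : a \is a fin_num.
    by apply: (ltgte_fin_num (a := x%:E) (b := c)); rewrite xa.
  have -> : (c < x%:E)%E = false.
    by apply/negbTE; rewrite -leNgt ltW ?(lt_trans xa).
  by apply: ProjK_below; rewrite ?fineK // -lte_fin fineK.
case: ifPn => [cx | ]; last rewrite -leNgt => xc; last exact: ProjK_inside.
have cF : c \is a fin_num.
  by apply: (ltgte_fin_num (a := a) (b := x%:E)); rewrite ac.
by apply: ProjK_above; rewrite ?fineK // -lte_fin fineK.
Qed.

Lemma projK_in x : (a <= (projK x)%:E)%E && ((projK x)%:E <= c)%E.
Proof.
case: projKP => [a' Ea _ | c' Ec _ | -> ->] //.
  by rewrite -Ea lexx ltW.
by rewrite -Ec lexx ltW.
Qed.

Local Notation drift B := (eta + sigma * rho * B).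
Local Notation dual B := (projK ((eta + sigma * rho * B) / (1 - b))).

Lemma lamstarE B : lamstar b eta sigma rho a c B = (1 - b) * dual B - drift B.
Proof.
rewrite /lamstar lt_Bminus lt_Bplus.
case: projKP => [a' -> _ | c' -> _ | _ _] /=;
  rewrite ?mulr1 ?mulr0 ?addr0 ?add0r //.
by field; rewrite gt_eqF.
Qed.

Lemma deltaK_lamstar B :
  deltaK a c (lamstar b eta sigma rho a c B) =
  (- (dual B * lamstar b eta sigma rho a c B))%:E.
Proof.
rewrite lamstarE; case: projKP => [a' -> | c' -> | _ _].
- rewrite ltr_pdivrMr // => ma; rewrite deltaK_gt0 ?EFinN ?EFinM //; lra.
- rewrite ltr_pdivlMr // => cm; rewrite deltaK_lt0 ?EFinN ?EFinM //; lra.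
- by rewrite mulrC divfK ?gt_eqF // subrr deltaK0 mulr0 oppr0.
Qed.

Lemma objK_ge_dual B y l : (a <= y%:E)%E -> (y%:E <= c)%E ->
  (((1 - b) * y * (2 * drift B - (1 - b) * y))%:E
   <= objK b eta sigma rho a c B l)%E.
Proof.
move=> ay yc; rewrite /objK.
apply: (@le_trans _ _
  ((2 * (1 - b) * - (y * l) + (eta + l + sigma * rho * B) ^+ 2)%:E)).
  have := sqr_ge0 (drift B + l - (1 - b) * y); rewrite lee_fin; nra.
rewrite EFinD EFinM leeD2r //; apply: lee_wpmul2l; last exact: deltaK_ge_linear.
by rewrite lee_fin mulr_ge0 ?ltW.
Qed.

Lemma objK_lamstar B :
  objK b eta sigma rho a c B (lamstar b eta sigma rho a c B) =
  ((1 - b) * dual B * (2 * drift B - (1 - b) * dual B))%:E.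
Proof.
by rewrite /objK deltaK_lamstar -EFinM -EFinD lamstarE; congr EFin; ring.
Qed.

Lemma lamstar_min B l :
  (objK b eta sigma rho a c B (lamstar b eta sigma rho a c B)
   <= objK b eta sigma rho a c B l)%E.
Proof.
have /andP[aK Kc] := projK_in (drift B / (1 - b)).
by rewrite objK_lamstar objK_ge_dual.
Qed.

Lemma ereal_inf_objK B :
  ereal_inf (range (objK b eta sigma rho a c B)) =
  objK b eta sigma rho a c B (lamstar b eta sigma rho a c B).
Proof.
apply/eqP; rewrite eq_le; apply/andP; split.
  by apply: ereal_inf_lbound; exists (lamstar b eta sigma rho a c B).
by apply/ereal_infP => _ [l _ <-]; exact: lamstar_min.
Qed.

Lemma pw_rhsE B : pw_rhs kappa b eta sigma rho a c B =
  - kappa * B + 2^-1 * sigma ^+ 2 * B ^+ 2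
  + 2^-1 * b * dual B * (2 * drift B - (1 - b) * dual B).
Proof.
rewrite /pw_rhs !leNgt lt_Bminus lt_Bplus.
case: projKP => [a' -> _ | c' -> _ | _ _] /=;
  rewrite ?mulr1 ?mulr0 ?addr0 ?add0r.
- by rewrite /r0m /r1m /r2m /=; field.
- by rewrite /r0p /r1p /r2p /=; field.
- by rewrite /r0 /r1 /r2; field; rewrite gt_eqF.
Qed.

Lemma hjb_rhsE B :
  hjb_rhs kappa b eta sigma rho a c B = (pw_rhs kappa b eta sigma rho a c B)%:E.
Proof.
rewrite /hjb_rhs ereal_inf_objK objK_lamstar -EFinM -EFinD pw_rhsE.
by congr EFin; field; rewrite gt_eqF.
Qed.

End Minimiser.

Theorem lemma2p3 (R : realType) (eta sigma kappa rho b : R) (a c : \bar R) :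
  0 < eta -> 0 < sigma -> 0 < kappa -> -1 < rho < 1 -> b < 1 -> b != 0 ->
  (a < c)%E ->
  (forall B l : R,
      (objK b eta sigma rho a c B (lamstar b eta sigma rho a c B)
       <= objK b eta sigma rho a c B l)%E) /\
  (forall Bf : R -> R,
      (Bf 0 = 0 /\
       forall tau : R, 0 <= tau ->
         derivable Bf tau 1 /\
         ((derive1 Bf tau)%:E = hjb_rhs kappa b eta sigma rho a c (Bf tau))%E)
      <->
      (Bf 0 = 0 /\
       forall tau : R, 0 <= tau ->
         derivable Bf tau 1 /\
         derive1 Bf tau = pw_rhs kappa b eta sigma rho a c (Bf tau))).
Proof.
move=> _ sigma_gt0 _ _ b_lt1 _ ac; split; first exact: lamstar_min.
move=> Bf; split=> -[Bf0 sol]; split=> // tau tau_ge0.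
all: have [dBf eqBf] := sol tau tau_ge0; split=> //.
- by move: eqBf; rewrite hjb_rhsE // => -[].
- by rewrite hjb_rhsE // eqBf.
Qed.
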